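(* Let $\mathcal D=(\mathbb N,<)$ with the natural order. Let $\mathit{cardRE}:\mathbb N\to\mathbb N$ be the partial function with $\mathit{cardRE}(n)=\mathrm{card}(W_n)$ if $W_n$ is finite and undefined otherwise, where $W_n$ is the computably enumerable set with code $n$ (in a standard acceptable numbering). Then $\mathit{cardRE}\in\mathrm{Max}_{\mathrm{Rec}}[\mathbb N\to\mathcal D]\setminus\mathrm{Min}_{\mathrm{PR}}[\mathbb N\to\mathcal D]$.
   Context: For a partial $f:\mathbb N\times\mathbb N\to\mathbb N$ monotone increasing (resp. decreasing) in its second argument on its domain, $\max f$ (resp. $\min f$) is the partial function defined exactly at those $x$ for which $\{f(x,t):t,\ f(x,t)\text{ defined}\}$ is finite and non-empty, with value its maximum (resp. minimum). $\mathrm{Max}_{\mathrm{Rec}}[\mathbb N\to\mathcal D]$ is the class of all $\max f$ with $f$ total computable and monotone increasing in its second argument; $\mathrm{Min}_{\mathrm{PR}}[\mathbb N\to\mathcal D]$ is the class of all $\min f$ with $f$ partial computable and monotone decreasing in its second argument. *)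

From Stdlib Require Import Arith List.
Import ListNotations.

Inductive term : Type :=
| Zero : term
| Succ : term
| Proj : nat -> term
| Comp : term -> list term -> term
| Prec : term -> term -> term
| Mu   : term -> term.

(** Big-step evaluation: [eval t v y] means the program [t] on arguments [v]
    halts with output [y].  It is deterministic, so every term denotes a
    partial function. *)
Inductive eval : term -> list nat -> nat -> Prop :=
| eZero v : eval Zero v 0
| eSucc x v : eval Succ (x :: v) (S x)
| eProj i v : i < length v -> eval (Proj i) v (nth i v 0)
| eComp f gs v ys z :
    Forall2 (fun g y => eval g v y) gs ys -> eval f ys z -> eval (Comp f gs) v z
| ePrec0 f g v y : eval f v y -> eval (Prec f g) (0 :: v) y
| ePrecS f g n v r y :
    eval (Prec f g) (n :: v) r -> eval g (n :: r :: v) y ->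
    eval (Prec f g) (S n :: v) y
| eMu f v n :
    eval f (n :: v) 0 ->
    (forall m, m < n -> exists k, eval f (m :: v) (S k)) ->
    eval (Mu f) v n.

(** * Partial functions are represented by their graphs (relations). *)

Definition pcomp1 (f : nat -> nat -> Prop) : Prop :=
  exists t, forall x y, f x y <-> eval t [x] y.
Definition pcomp2 (f : nat -> nat -> nat -> Prop) : Prop :=
  exists t, forall x s y, f x s y <-> eval t [x; s] y.

Definition tcomp1 (f : nat -> nat) : Prop :=
  exists t, forall x, eval t [x] (f x).
Definition tcomp2 (f : nat -> nat -> nat) : Prop :=
  exists t, forall x s, eval t [x; s] (f x s).

Definition acceptable (phi : nat -> nat -> nat -> Prop) : Prop :=
  pcomp2 phi /\
  (forall f, pcomp1 f -> exists e, forall x y, phi e x y <-> f x y) /\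
  (forall psi, pcomp2 psi ->
     exists s : nat -> nat, tcomp1 s /\
       forall e x y, psi e x y <-> phi (s e) x y).

Definition W (phi : nat -> nat -> nat -> Prop) (n x : nat) : Prop :=
  exists y, phi n x y.

Definition cardRE (phi : nat -> nat -> nat -> Prop) (n c : nat) : Prop :=
  exists l : list nat, NoDup l /\ (forall x, In x l <-> W phi n x) /\ length l = c.

Definition values (f : nat -> nat -> nat -> Prop) (x z : nat) : Prop :=
  exists t, f x t z.

Definition pmax (f : nat -> nat -> nat -> Prop) (x y : nat) : Prop :=
  (exists l : list nat, forall z, values f x z <-> In z l) /\
  values f x y /\ (forall z, values f x z -> z <= y).

Definition pmin (f : nat -> nat -> nat -> Prop) (x y : nat) : Prop :=
  (exists l : list nat, forall z, values f x z <-> In z l) /\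
  values f x y /\ (forall z, values f x z -> y <= z).

Definition mono_incr (f : nat -> nat -> nat -> Prop) : Prop :=
  forall x t t' y y', t <= t' -> f x t y -> f x t' y' -> y <= y'.
Definition mono_decr (f : nat -> nat -> nat -> Prop) : Prop :=
  forall x t t' y y', t <= t' -> f x t y -> f x t' y' -> y' <= y.

Definition graph2 (f : nat -> nat -> nat) : nat -> nat -> nat -> Prop :=
  fun x t y => f x t = y.

Definition MaxRec (g : nat -> nat -> Prop) : Prop :=
  exists f : nat -> nat -> nat,
    tcomp2 f /\ mono_incr (graph2 f) /\
    forall x y, g x y <-> pmax (graph2 f) x y.

Definition MinPR (g : nat -> nat -> Prop) : Prop :=
  exists f : nat -> nat -> nat -> Prop,
    pcomp2 f /\ mono_decr f /\
    forall x y, g x y <-> pmin f x y.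

(** cardRE is the limit of the stage counts [|{x < s | x enters W_n by stage s}|]:
    they form a total computable function, nondecreasing in [s], that stabilises
    exactly when [W_n] is finite.  Their computability comes from compiling every
    term into a total term that runs it under a step bound.

    Conversely, suppose [cardRE = min f] with [f] partial computable and
    decreasing.  By the recursion theorem some [e] has [W_e = ℕ] when [f(e, _)] is
    defined somewhere and [W_e = ∅] otherwise.  In the first case [min f(e, _)]
    exists, since a decreasing function takes finitely many values, although
    [W_e] is infinite; in the second [cardRE(e) = 0] although [min f(e, _)] is
    undefined. *)

From Stdlib Require Import Arith Lia List Classical.
Import ListNotations.

Section EvalNestedInd.

Variable P : term -> list nat -> nat -> Prop.

Hypothesis P_Zero : forall v, P Zero v 0.
Hypothesis P_Succ : forall x v, P Succ (x :: v) (S x).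
Hypothesis P_Proj : forall i v, i < length v -> P (Proj i) v (nth i v 0).
Hypothesis P_Comp : forall f gs v ys z,
  Forall2 (fun g y => eval g v y /\ P g v y) gs ys -> eval f ys z -> P f ys z ->
  P (Comp f gs) v z.
Hypothesis P_Prec0 : forall f g v y, eval f v y -> P f v y -> P (Prec f g) (0 :: v) y.
Hypothesis P_PrecS : forall f g n v r y,
  eval (Prec f g) (n :: v) r -> P (Prec f g) (n :: v) r ->
  eval g (n :: r :: v) y -> P g (n :: r :: v) y -> P (Prec f g) (S n :: v) y.
Hypothesis P_Mu : forall f v n,
  eval f (n :: v) 0 -> P f (n :: v) 0 ->
  (forall m, m < n -> exists k, eval f (m :: v) (S k) /\ P f (m :: v) (S k)) ->
  P (Mu f) v n.

Fixpoint eval_nested_ind t v y (H : eval t v y) {struct H} : P t v y :=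
  match H in eval t v y return P t v y with
  | eZero v => P_Zero v
  | eSucc x v => P_Succ x v
  | eProj i v h => P_Proj i v h
  | eComp f gs v ys z HF Hf =>
      P_Comp f gs v ys z
        ((fix args gs ys (HF : Forall2 (fun g y => eval g v y) gs ys)
            : Forall2 (fun g y => eval g v y /\ P g v y) gs ys :=
            match HF in Forall2 _ gs ys
                  return Forall2 (fun g y => eval g v y /\ P g v y) gs ys with
            | Forall2_nil _ => Forall2_nil _
            | @Forall2_cons _ _ _ g y gs' ys' h1 h2 =>
                Forall2_cons g y (conj h1 (eval_nested_ind g v y h1)) (args gs' ys' h2)
            end) gs ys HF)
        Hf (eval_nested_ind f ys z Hf)
  | ePrec0 f g v y h => P_Prec0 f g v y h (eval_nested_ind _ _ _ h)
  | ePrecS f g n v r y h1 h2 =>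
      P_PrecS f g n v r y h1 (eval_nested_ind _ _ _ h1) h2 (eval_nested_ind _ _ _ h2)
  | eMu f v n h1 h2 =>
      P_Mu f v n h1 (eval_nested_ind _ _ _ h1)
        (fun m hm => match h2 m hm with
                     | ex_intro _ k hk => ex_intro _ k (conj hk (eval_nested_ind _ _ _ hk))
                     end)
  end.

End EvalNestedInd.

Definition term_nested_ind (P : term -> Prop) (P_Zero : P Zero) (P_Succ : P Succ)
    (P_Proj : forall i, P (Proj i))
    (P_Comp : forall f gs, P f -> Forall P gs -> P (Comp f gs))
    (P_Prec : forall f g, P f -> P g -> P (Prec f g))
    (P_Mu : forall f, P f -> P (Mu f)) : forall t, P t :=
  fix F t :=
    match t with
    | Zero => P_Zero
    | Succ => P_Succ
    | Proj i => P_Proj i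
    | Comp f gs =>
        P_Comp f gs (F f)
          ((fix args l := match l return Forall P l with
                          | [] => Forall_nil _
                          | g :: l' => Forall_cons g (F g) (args l')
                          end) gs)
    | Prec f g => P_Prec f g (F f) (F g)
    | Mu f => P_Mu f (F f)
    end.

Definition case_prim : term := Prec (Proj 0) (Proj 3).
Definition pred_prim : term := Prec Zero (Proj 0).
Definition add_prim : term := Prec (Proj 0) (Comp Succ [Proj 1]).

Definition ifz (A B C : term) : term := Comp case_prim [A; B; C].
Definition tpred (A : term) : term := Comp pred_prim [A].
Definition tsucc (A : term) : term := Comp Succ [A].
Definition tone : term := tsucc Zero.
Definition tadd (A B : term) : term := Comp add_prim [A; B].
Definition proj_block (a n : nat) : list term := map Proj (seq a n).

Lemma eval_Proj i v y : i < length v -> nth i v 0 = y -> eval (Proj i) v y.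
Proof. intros h <-; now constructor. Qed.

Ltac solve_proj := apply eval_Proj; simpl; auto; lia.
Ltac solve_args := repeat first [apply Forall2_nil | apply Forall2_cons; [solve_proj|]].

Lemma eval_case_prim a b c :
  eval case_prim [a; b; c] (match a with 0 => b | S _ => c end).
Proof.
  induction a.
  - constructor. solve_proj.
  - econstructor; [exact IHa | solve_proj].
Qed.

Lemma eval_pred_prim a : eval pred_prim [a] (pred a).
Proof.
  induction a.
  - do 2 constructor.
  - econstructor; [exact IHa | solve_proj].
Qed.

Lemma eval_add_prim a b : eval add_prim [a; b] (a + b).
Proof.
  induction a.
  - constructor. solve_proj.
  - econstructor; [exact IHa|]. econstructor; [solve_args | constructor].
Qed.

Lemma eval_ifz A B C v a b c : eval A v a -> eval B v b -> eval C v c ->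
  eval (ifz A B C) v (match a with 0 => b | S _ => c end).
Proof. intros. econstructor; [repeat constructor; eauto | apply eval_case_prim]. Qed.

Lemma eval_tpred A v a : eval A v a -> eval (tpred A) v (pred a).
Proof. intros. econstructor; [repeat constructor; eauto | apply eval_pred_prim]. Qed.

Lemma eval_tsucc A v a : eval A v a -> eval (tsucc A) v (S a).
Proof. intros. econstructor; [repeat constructor; eauto | constructor]. Qed.

Lemma eval_tone v : eval tone v 1.
Proof. apply eval_tsucc. constructor. Qed.

Lemma eval_tadd A B v a b : eval A v a -> eval B v b -> eval (tadd A B) v (a + b).
Proof. intros. econstructor; [repeat constructor; eauto | apply eval_add_prim]. Qed.

Lemma eval_proj_block p w :
  Forall2 (fun g y => eval g (p ++ w) y) (proj_block (length p) (length w)) w.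
Proof.
  revert p; induction w as [|x w IH]; intros p; simpl; constructor.
  - apply eval_Proj; [rewrite length_app; simpl; lia|].
    rewrite app_nth2 by lia. now rewrite Nat.sub_diag.
  - specialize (IH (p ++ [x])). rewrite <- app_assoc, length_app, Nat.add_1_r in IH.
    exact IH.
Qed.

Lemma eval_app_proj_block gs ys p w : Forall2 (fun g y => eval g (p ++ w) y) gs ys ->
  Forall2 (fun g y => eval g (p ++ w) y) (gs ++ proj_block (length p) (length w)) (ys ++ w).
Proof. intros H. apply Forall2_app; [exact H | apply eval_proj_block]. Qed.

(** * Bounded evaluation *)

Fixpoint all_some (l : list (option nat)) : option (list nat) :=
  match l with
  | [] => Some []
  | o :: l' => match o, all_some l' with
               | Some y, Some ys => Some (y :: ys)
               | _, _ => None
               end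
  end.

Fixpoint prec_iter (h0 : option nat) (hs : nat -> nat -> option nat) (n : nat) : option nat :=
  match n with
  | 0 => h0
  | S n' => match prec_iter h0 hs n' with Some r => hs n' r | None => None end
  end.

(** [mu_scan h j] records the search for a zero of [h] over [0, j): [0] while every
    value met is defined and positive, [1] once an undefined value is met, and
    [m + 2] once the first zero is found at [m]. *)
Fixpoint mu_scan (h : nat -> option nat) (j : nat) : nat :=
  match j with
  | 0 => 0
  | S j' => match mu_scan h j' with
            | 0 => match h j' with None => 1 | Some 0 => j' + 2 | Some (S _) => 0 end
            | a => a
            end
  end.

Definition mu_result (a : nat) : option nat :=
  match a with S (S m) => Some m | _ => None end.

(** Evaluation in which every unbounded search inspects only its first [s] candidates. *)
Fixpoint beval (s : nat) (t : term) (v : list nat) {struct t} : option nat :=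
  match t with
  | Zero => Some 0
  | Succ => match v with x :: _ => Some (S x) | [] => None end
  | Proj i => if i <? length v then Some (nth i v 0) else None
  | Comp f gs => match all_some (map (fun g => beval s g v) gs) with
                 | Some ys => beval s f ys
                 | None => None
                 end
  | Prec f g => match v with
                | [] => None
                | n :: w => prec_iter (beval s f w) (fun n r => beval s g (n :: r :: w)) n
                end
  | Mu f => mu_result (mu_scan (fun m => beval s f (m :: v)) s)
  end.

Lemma all_some_Some l ys : all_some l = Some ys -> l = map Some ys.
Proof.
  revert ys; induction l as [|o l IH]; simpl; intros ys h.
  - now inversion h.
  - destruct o as [y|]; [|discriminate]. destruct (all_some l) as [ys'|]; [|discriminate].
    inversion h; subst. simpl. f_equal. auto.
Qed.

Lemma all_some_None l : all_some l = None -> In None l.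
Proof.
  induction l as [|o l IH]; simpl; intros h; [discriminate|].
  destruct o as [y|]; auto. destruct (all_some l); [discriminate | auto].
Qed.

Lemma mu_scan_0_inv h j : mu_scan h j = 0 -> forall m, m < j -> exists k, h m = Some (S k).
Proof.
  induction j as [|j IH]; simpl; intros H m Hm; [lia|].
  destruct (mu_scan h j) eqn:E; [|discriminate].
  destruct (h j) as [[|k]|] eqn:Ej; try discriminate; [rewrite Nat.add_comm in H; discriminate|].
  destruct (Nat.eq_dec m j); [subst; eauto | apply IH; auto; lia].
Qed.

Lemma mu_scan_0_intro h j : (forall m, m < j -> exists k, h m = Some (S k)) -> mu_scan h j = 0.
Proof.
  induction j as [|j IH]; simpl; intros H; auto.
  rewrite IH by (intros; apply H; lia). now destruct (H j ltac:(lia)) as [k ->].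
Qed.

Lemma mu_scan_found_inv h j m : mu_scan h j = S (S m) ->
  m < j /\ h m = Some 0 /\ (forall m', m' < m -> exists k, h m' = Some (S k)).
Proof.
  induction j as [|j IH]; simpl; intros H; [discriminate|].
  destruct (mu_scan h j) eqn:E.
  - destruct (h j) as [[|k]|] eqn:Ej; try discriminate.
    rewrite Nat.add_comm in H. inversion H; subst. eauto using mu_scan_0_inv.
  - destruct (IH H) as [h1 [h2 h3]]. repeat split; auto; lia.
Qed.

Lemma mu_scan_found_intro h j m : m < j -> h m = Some 0 ->
  (forall m', m' < m -> exists k, h m' = Some (S k)) -> mu_scan h j = S (S m).
Proof.
  induction j as [|j IH]; simpl; intros H1 H2 H3; [lia|].
  destruct (Nat.eq_dec m j).
  - subst. rewrite mu_scan_0_intro, H2 by auto. now rewrite Nat.add_comm.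
  - rewrite IH by (auto; lia). auto.
Qed.

Lemma beval_Mu s f v m :
  beval s (Mu f) v = Some m <-> mu_scan (fun m => beval s f (m :: v)) s = S (S m).
Proof.
  simpl. unfold mu_result.
  destruct (mu_scan _ s) as [|[|m']]; split; intro H; try discriminate; congruence.
Qed.

Lemma beval_sound t : forall s v y, beval s t v = Some y -> eval t v y.
Proof.
  induction t as [| |i|f gs IHf IHgs|f g IHf IHg|f IHf] using term_nested_ind;
    intros s v y H; simpl in H.
  - inversion H; constructor.
  - destruct v; inversion H; constructor.
  - destruct (Nat.ltb_spec i (length v)); inversion H. now constructor.
  - destruct (all_some _) as [ys|] eqn:E; [|discriminate].
    apply all_some_Some in E. econstructor; [|eauto].
    clear H. revert ys E. induction IHgs as [|g gs Hg _ IH]; intros [|y' ys] E;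
      inversion E; constructor; eauto.
  - destruct v as [|n w]; [discriminate|]. revert y H.
    induction n as [|n IH]; simpl; intros y H; [constructor; eauto|].
    destruct (prec_iter _ _ n) eqn:E; [econstructor; eauto | discriminate].
  - apply (beval_Mu s f v y), mu_scan_found_inv in H. destruct H as [_ [h2 h3]].
    constructor; [eauto|]. intros m hm. destruct (h3 m hm) as [k hk]. eauto.
Qed.

Lemma beval_mono t : forall s s' v y, s <= s' -> beval s t v = Some y -> beval s' t v = Some y.
Proof.
  induction t as [| |i|f gs IHf IHgs|f g IHf IHg|f IHf] using term_nested_ind;
    intros s s' v y Hs H; auto.
  - simpl in *. destruct (all_some (map (fun g => beval s g v) gs)) eqn:E; [|discriminate].
    assert (E' : all_some (map (fun g => beval s' g v) gs) = Some l).
    { clear H. revert l E. induction IHgs as [|g gs Hg _ IH]; simpl; intros l E; auto.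
      destruct (beval s g v) eqn:E1; [|discriminate].
      destruct (all_some (map _ gs)) eqn:E2; [|discriminate].
      now rewrite (Hg _ _ _ _ Hs E1), (IH _ eq_refl). }
    rewrite E'. eauto.
  - destruct v as [|n w]; simpl in *; [discriminate|]. revert y H.
    induction n as [|n IH]; simpl; intros y H; [eauto|].
    destruct (prec_iter (beval s f w) _ n) eqn:E; [|discriminate].
    rewrite (IH _ eq_refl). eauto.
  - apply beval_Mu, mu_scan_found_inv in H. destruct H as [h1 [h2 h3]]. apply beval_Mu.
    apply mu_scan_found_intro; [lia | eauto|].
    intros m' hm'. destruct (h3 m' hm') as [k hk]. eauto.
Qed.

Definition eventually (P : nat -> Prop) : Prop := exists s0, forall s, s0 <= s -> P s.

Lemma eventually_and (P Q : nat -> Prop) :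
  eventually P -> eventually Q -> eventually (fun s => P s /\ Q s).
Proof. intros [a Ha] [b Hb]. exists (max a b). split; [apply Ha | apply Hb]; lia. Qed.

Lemma eventually_forall_lt (P : nat -> nat -> Prop) n :
  (forall m, m < n -> eventually (P m)) -> eventually (fun s => forall m, m < n -> P m s).
Proof.
  induction n as [|n IH]; intros H.
  - exists 0. intros; lia.
  - destruct (eventually_and _ _ (IH (fun m hm => H m ltac:(lia))) (H n ltac:(lia)))
      as [s0 Hs0].
    exists s0. intros s hs m hm. destruct (Hs0 s hs) as [H1 H2].
    destruct (Nat.eq_dec m n); [subst; exact H2 | apply H1; lia].
Qed.

Lemma beval_complete t v y : eval t v y -> eventually (fun s => beval s t v = Some y).
Proof.
  revert t v y. apply eval_nested_ind.
  - exists 0; auto.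
  - exists 0; auto.
  - intros i v h. exists 0; intros; simpl. now destruct (Nat.ltb_spec i (length v)); [|lia].
  - intros f gs v ys z HF _ Hf.
    assert (Hargs : eventually (fun s => all_some (map (fun g => beval s g v) gs) = Some ys)).
    { clear Hf. induction HF as [|g y gs ys [_ Hg] _ IH]; [exists 0; auto|].
      destruct (eventually_and _ _ Hg IH) as [s0 Hs0]. exists s0. intros s hs; simpl.
      destruct (Hs0 s hs) as [-> ->]. auto. }
    destruct (eventually_and _ _ Hargs Hf) as [s0 Hs0]. exists s0. intros s hs; simpl.
    destruct (Hs0 s hs) as [-> H]. exact H.
  - intros f g v y _ [s0 H]. exists s0. intros; simpl; auto.
  - intros f g n v r y _ Hr _ Hy. destruct (eventually_and _ _ Hr Hy) as [s0 Hs0].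
    exists s0. intros s hs. destruct (Hs0 s hs) as [H1 H2]. simpl in H1 |- *. now rewrite H1.
  - intros f v n _ Hz Hpos.
    assert (Hbelow : eventually (fun s =>
              forall m, m < n -> exists k, beval s f (m :: v) = Some (S k))).
    { apply eventually_forall_lt. intros m hm. destruct (Hpos m hm) as [k [_ [s0 Hs0]]].
      exists s0. eauto. }
    destruct (eventually_and _ _ Hz Hbelow) as [s0 Hs0].
    exists (max (S n) s0). intros s hs. destruct (Hs0 s ltac:(lia)) as [H1 H2].
    apply beval_Mu, mu_scan_found_intro; auto; lia.
Qed.

Lemma eval_deterministic t v y1 y2 : eval t v y1 -> eval t v y2 -> y1 = y2.
Proof.
  intros h1 h2.
  destruct (eventually_and _ _ (beval_complete _ _ _ h1) (beval_complete _ _ _ h2)) as [s0 Hs0].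
  destruct (Hs0 s0 (le_n _)) as [E1 E2]. congruence.
Qed.

(** * Clocked programs *)

Definition opt_code (o : option nat) : nat := match o with None => 0 | Some y => S y end.

Fixpoint all_nonzero (cs : list term) : term :=
  match cs with [] => tone | c :: cs' => ifz c Zero (all_nonzero cs') end.

(** A clocked program receives the step bound as argument [0] and returns [0] for
    "undefined" and [y + 1] for [y]. *)
Definition clocked_comp (cf : term) (cgs : list term) : term :=
  ifz (all_nonzero cgs) Zero (Comp cf (Proj 0 :: map tpred cgs)).

Definition clocked_prec (cf cg : term) (k : nat) : term :=
  Comp (Prec cf (ifz (Proj 1) Zero
                   (Comp cg ([Proj 2; Proj 0; tpred (Proj 1)] ++ proj_block 3 k))))
       ([Proj 1; Proj 0] ++ proj_block 2 k).

Definition mu_scan_step (c : term) : term :=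
  ifz (Proj 1) (ifz c tone (ifz (tpred c) (tsucc (tsucc (Proj 0))) Zero)) (Proj 1).

Definition clocked_mu (cf : term) (k : nat) : term :=
  Comp (ifz (tpred (Proj 0)) Zero (tpred (Proj 0)))
       [Comp (Prec Zero (mu_scan_step (Comp cf ([Proj 2; Proj 0] ++ proj_block 3 k))))
             ([Proj 0; Proj 0] ++ proj_block 1 k)].

Fixpoint clocked (t : term) (k : nat) : term :=
  match t with
  | Zero => tone
  | Succ => match k with 0 => Zero | S _ => tsucc (tsucc (Proj 1)) end
  | Proj i => if i <? k then tsucc (Proj (S i)) else Zero
  | Comp f gs => clocked_comp (clocked f (length gs)) (map (fun g => clocked g k) gs)
  | Prec f g => match k with
                | 0 => Zero
                | S k' => clocked_prec (clocked f k') (clocked g (S (S k'))) k'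
                end
  | Mu f => clocked_mu (clocked f (S k)) k
  end.

Lemma eval_all_nonzero v cs ys : Forall2 (fun c y => eval c v y) cs ys ->
  exists a, eval (all_nonzero cs) v a /\ (a = 0 <-> In 0 ys).
Proof.
  induction 1 as [|c y cs ys h1 _ [a [Ha Hi]]]; simpl.
  - exists 1. split; [apply eval_tone | split; [discriminate | tauto]].
  - eexists. split; [apply (eval_ifz _ _ _ _ _ _ _ h1 (eZero _) Ha)|].
    destruct y; simpl; [tauto|]. rewrite <- Hi. split; [tauto|].
    intros [h|h]; [discriminate | exact h].
Qed.

Lemma eval_clocked_comp cf cg f gs s v :
  (forall ys, length ys = length gs -> eval cf (s :: ys) (opt_code (beval s f ys))) ->
  Forall (fun g => eval (cg g) (s :: v) (opt_code (beval s g v))) gs ->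
  eval (clocked_comp cf (map cg gs)) (s :: v) (opt_code (beval s (Comp f gs) v)).
Proof.
  intros Hf Hgs. simpl.
  set (l := map (fun g => beval s g v) gs).
  assert (Hlen : length l = length gs) by apply length_map.
  assert (HF : Forall2 (fun c y => eval c (s :: v) y) (map cg gs) (map opt_code l)).
  { clear Hf. unfold l. rewrite !map_map. induction Hgs; simpl; constructor; auto. }
  clearbody l.
  set (ys := map (fun o => pred (opt_code o)) l).
  assert (Hcall : eval (Comp cf (Proj 0 :: map tpred (map cg gs))) (s :: v)
                    (opt_code (beval s f ys))).
  { econstructor; [constructor; [solve_proj|] | apply Hf; unfold ys; now rewrite length_map].
    replace ys with (map pred (map opt_code l)) by apply map_map. clear - HF.
    induction HF; simpl; constructor; auto using eval_tpred. }
  destruct (eval_all_nonzero _ _ _ HF) as [a [Ha Hzero]].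
  pose proof (eval_ifz _ _ _ _ _ _ _ Ha (eZero _) Hcall) as H.
  destruct (all_some l) as [ys'|] eqn:E.
  - apply all_some_Some in E. subst l. rewrite map_map in Hzero.
    replace ys with ys' in H by (unfold ys; rewrite map_map; symmetry; apply map_id).
    destruct a as [|a]; [|exact H].
    destruct (proj1 (in_map_iff _ _ _) (proj1 Hzero eq_refl)) as [y [Hy _]]. discriminate.
  - replace a with 0 in H; [exact H|].
    symmetry. apply Hzero, in_map_iff. exists None. auto using all_some_None.
Qed.

Lemma eval_clocked_prec cf cg f g s n w :
  eval cf (s :: w) (opt_code (beval s f w)) ->
  (forall m r, eval cg (s :: m :: r :: w) (opt_code (beval s g (m :: r :: w)))) ->
  eval (clocked_prec cf cg (length w)) (s :: n :: w) (opt_code (beval s (Prec f g) (n :: w))).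
Proof.
  intros Hf Hg. econstructor.
  - apply (eval_app_proj_block _ [n; s] [s; n]).
    solve_args.
  - simpl. induction n as [|n IH]; simpl; [now constructor|].
    econstructor; [exact IH|].
    assert (Hstep : forall r,
      eval (Comp cg ([Proj 2; Proj 0; tpred (Proj 1)] ++ proj_block 3 (length w)))
           (n :: r :: s :: w) (opt_code (beval s g (n :: pred r :: w)))).
    { intros r. econstructor; [|apply Hg].
      apply (eval_app_proj_block _ [s; n; pred r] [n; r; s]).
      solve_args. constructor; [apply eval_tpred; solve_proj | constructor]. }
    destruct (prec_iter _ _ n) as [r|]; simpl.
    + refine (eval_ifz _ _ _ _ (S r) 0 _ _ (eZero _) (Hstep (S r))). solve_proj.
    + refine (eval_ifz _ _ _ _ 0 0 _ _ (eZero _) (Hstep 0)). solve_proj.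
Qed.

Lemma eval_mu_scan_step c h s v j :
  (forall a, eval c (j :: a :: s :: v) (opt_code (h j))) ->
  eval (mu_scan_step c) (j :: mu_scan h j :: s :: v) (mu_scan h (S j)).
Proof.
  intros Hc. set (a := mu_scan h j).
  assert (Hj : eval (Proj 0) (j :: a :: s :: v) j) by solve_proj.
  assert (Ha : eval (Proj 1) (j :: a :: s :: v) a) by solve_proj.
  assert (Hsearch : eval (ifz c tone (ifz (tpred c) (tsucc (tsucc (Proj 0))) Zero))
                      (j :: a :: s :: v)
                      (match h j with None => 1 | Some 0 => j + 2 | Some (S _) => 0 end)).
  { pose proof (eval_ifz _ _ _ _ _ _ _ (Hc a) (eval_tone _)
                  (eval_ifz _ _ _ _ _ _ _ (eval_tpred _ _ _ (Hc a))
                     (eval_tsucc _ _ _ (eval_tsucc _ _ _ Hj)) (eZero _))) as H.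
    destruct (h j) as [[|y]|]; simpl in H; auto. now rewrite Nat.add_comm. }
  pose proof (eval_ifz _ _ _ _ _ _ _ Ha Hsearch Ha) as H.
  simpl. fold a. destruct a; exact H.
Qed.

Lemma eval_clocked_mu cf f s v :
  (forall m, eval cf (s :: m :: v) (opt_code (beval s f (m :: v)))) ->
  eval (clocked_mu cf (length v)) (s :: v) (opt_code (beval s (Mu f) v)).
Proof.
  intros Hf. set (h := fun m => beval s f (m :: v)).
  set (c := Comp cf ([Proj 2; Proj 0] ++ proj_block 3 (length v))).
  assert (Hscan : forall j, eval (Prec Zero (mu_scan_step c)) (j :: s :: v) (mu_scan h j)).
  { induction j as [|j IH]; [do 2 constructor|].
    econstructor; [exact IH|]. apply eval_mu_scan_step. intros a. econstructor; [|apply Hf].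
    apply (eval_app_proj_block _ [s; j] [j; a; s]). solve_args. }
  econstructor.
  - constructor; [|constructor]. econstructor; [|apply Hscan].
    apply (eval_app_proj_block _ [s; s] [s]). solve_args.
  - assert (Ha : eval (Proj 0) [mu_scan h s] (mu_scan h s)) by solve_proj.
    pose proof (eval_ifz _ _ _ _ _ _ _ (eval_tpred _ _ _ Ha) (eZero _) (eval_tpred _ _ _ Ha)) as H.
    simpl. fold h. destruct (mu_scan h s) as [|[|m]]; exact H.
Qed.

Lemma eval_clocked t : forall k s v, length v = k ->
  eval (clocked t k) (s :: v) (opt_code (beval s t v)).
Proof.
  induction t as [| |i|f gs IHf IHgs|f g IHf IHg|f IHf] using term_nested_ind;
    intros k s v <-.
  - apply eval_tone.
  - destruct v as [|x v]; [constructor|]. apply eval_tsucc, eval_tsucc. solve_proj.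
  - simpl. destruct (Nat.ltb_spec i (length v)); [apply eval_tsucc; solve_proj | constructor].
  - apply eval_clocked_comp; [intros; apply IHf; auto|].
    eapply Forall_impl; [|exact IHgs]. simpl. auto.
  - destruct v as [|n w]; [constructor|]. apply eval_clocked_prec; auto.
  - apply eval_clocked_mu. auto.
Qed.

(** * Stages of a domain *)

Definition is_defined (o : option nat) : bool :=
  match o with Some _ => true | None => false end.

Definition stage (t : term) (n s : nat) : list nat :=
  filter (fun x => is_defined (beval s t [n; x])) (seq 0 s).

Definition stage_card (t : term) (n s : nat) : nat := length (stage t n s).

Definition stage_count_step (t : term) : term :=
  tadd (Proj 1) (ifz (Comp (clocked t 2) [Proj 3; Proj 2; Proj 0]) Zero tone).

Definition stage_card_term (t : term) : term :=
  Comp (Prec Zero (stage_count_step t)) [Proj 1; Proj 0; Proj 1].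

Lemma eval_stage_card_term t n s : eval (stage_card_term t) [n; s] (stage_card t n s).
Proof.
  econstructor.
  - solve_args.
  - unfold stage_card, stage.
    enough (forall k, eval (Prec Zero (stage_count_step t)) [k; n; s]
                        (length (filter (fun x => is_defined (beval s t [n; x])) (seq 0 k))))
      by auto.
    induction k as [|k IH]; [do 2 constructor|].
    econstructor; [exact IH|].
    rewrite seq_S, filter_app, length_app. simpl.
    apply eval_tadd; [solve_proj|].
    assert (Hk : eval (Comp (clocked t 2) [Proj 3; Proj 2; Proj 0])
                   [k; length (filter (fun x => is_defined (beval s t [n; x])) (seq 0 k)); n; s]
                   (opt_code (beval s t [n; k]))).
    { econstructor; [solve_args | apply eval_clocked; reflexivity]. }
    pose proof (eval_ifz _ _ _ _ _ _ _ Hk (eZero _) (eval_tone _)) as H.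
    destruct (beval s t [n; k]); exact H.
Qed.

Lemma stage_NoDup t n s : NoDup (stage t n s).
Proof. apply NoDup_filter, seq_NoDup. Qed.

Lemma In_stage t n s x : In x (stage t n s) <-> x < s /\ exists y, beval s t [n; x] = Some y.
Proof.
  unfold stage. rewrite filter_In, in_seq.
  destruct (beval s t [n; x]); simpl; split; intros [h1 h2]; try split; eauto; try lia.
  destruct h2 as [? ?]; discriminate.
Qed.

Lemma stage_mono t n s s' : s <= s' -> incl (stage t n s) (stage t n s').
Proof.
  intros hs x [h1 [y h2]] % In_stage. apply In_stage.
  split; [lia|]. exists y. eapply beval_mono; eauto.
Qed.

Lemma stage_card_mono t n s s' : s <= s' -> stage_card t n s <= stage_card t n s'.
Proof. intros. apply NoDup_incl_length; [apply stage_NoDup | now apply stage_mono]. Qed.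

Lemma stage_card_pos t n s : 0 < stage_card t n s <-> exists x, In x (stage t n s).
Proof.
  unfold stage_card. destruct (stage t n s) as [|x l]; simpl.
  - split; [lia | intros [_ []]].
  - split; [eauto | lia].
Qed.

Lemma in_some_stage t n x : (exists y, eval t [n; x] y) <-> exists s, In x (stage t n s).
Proof.
  split.
  - intros [y h]. destruct (beval_complete _ _ _ h) as [s0 H].
    exists (max s0 (S x)). apply In_stage. split; [lia|]. exists y. apply H; lia.
  - intros [s [_ [y h]] % In_stage]. exists y. eapply beval_sound; eauto.
Qed.

Lemma eventually_incl_stage t n l : (forall x, In x l -> exists y, eval t [n; x] y) ->
  eventually (fun s => incl l (stage t n s)).
Proof.
  induction l as [|x l IH]; intros Hl; [exists 0; intros s _ z []|].
  destruct (proj1 (in_some_stage t n x) (Hl x (or_introl eq_refl))) as [sx Hx].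
  assert (Hlate : eventually (fun s => In x (stage t n s))).
  { exists sx. intros s hs. exact (stage_mono _ _ _ _ hs _ Hx). }
  destruct (eventually_and _ _ (IH (fun z hz => Hl z (or_intror hz))) Hlate) as [s0 Hs0].
  exists s0. intros s hs z [<- | hz]; apply (Hs0 s hs); auto.
Qed.

Definition dom_card (t : term) (n c : nat) : Prop :=
  exists l, NoDup l /\ (forall x, In x l <-> exists y, eval t [n; x] y) /\ length l = c.

Lemma dom_card_pmax_stage_card t n c : dom_card t n c <-> pmax (graph2 (stage_card t)) n c.
Proof.
  unfold pmax, values, graph2. split.
  - intros [l [Hnd [Hdom <-]]].
    assert (Hle : forall s, stage_card t n s <= length l).
    { intros s. apply NoDup_incl_length; [apply stage_NoDup|].
      intros x hx. apply Hdom, in_some_stage. eauto. }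
    destruct (eventually_incl_stage t n l (fun x => proj1 (Hdom x))) as [s0 Hs0].
    assert (Hlim : forall s, s0 <= s -> stage_card t n s = length l).
    { intros s hs. apply Nat.le_antisymm; [apply Hle|].
      exact (NoDup_incl_length Hnd (Hs0 s hs)). }
    split; [|split; [exists s0; apply Hlim; lia | intros z [s <-]; apply Hle]].
    exists (map (stage_card t n) (seq 0 (S s0))). intros z. rewrite in_map_iff. split.
    + intros [s <-]. destruct (Nat.le_gt_cases s s0).
      * exists s. rewrite in_seq. split; [reflexivity | lia].
      * exists s0. rewrite in_seq, !Hlim by lia. split; [reflexivity | lia].
    + intros [s [<- _]]. eauto.
  - intros [_ [[s0 <-] Hmax]].
    exists (stage t n s0). split; [apply stage_NoDup | split; [|reflexivity]].
    intros x. rewrite in_some_stage. split; [eauto|]. intros [s1 H1].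
    destruct (in_dec Nat.eq_dec x (stage t n s0)) as [i | ni]; [exact i | exfalso].
    assert (Hgrow : length (x :: stage t n s0) <= stage_card t n (max s0 s1)).
    { apply NoDup_incl_length; [constructor; [exact ni | apply stage_NoDup]|].
      intros z [<- | hz]; [eapply stage_mono, H1 | eapply stage_mono, hz]; lia. }
    specialize (Hmax _ (ex_intro _ (max s0 s1) eq_refl)).
    simpl in Hgrow. unfold stage_card in *. lia.
Qed.

Lemma cardRE_MaxRec phi : pcomp2 phi -> MaxRec (cardRE phi).
Proof.
  intros [tp Hp]. exists (stage_card tp). split; [|split].
  - exists (stage_card_term tp). intros. apply eval_stage_card_term.
  - intros n s s' c c' hs <- <-. now apply stage_card_mono.
  - intros n c. rewrite <- dom_card_pmax_stage_card. unfold cardRE, dom_card, W.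
    setoid_rewrite Hp. reflexivity.
Qed.

(** * The recursion theorem *)

Definition diag_term (tp : term) : term := Comp tp [Comp tp [Proj 0; Proj 0]; Proj 1].

Lemma eval_Comp2 f g1 g2 v z :
  eval (Comp f [g1; g2]) v z <-> exists a b, eval g1 v a /\ eval g2 v b /\ eval f [a; b] z.
Proof.
  split.
  - intros H. inversion H; subst. inversion H2; subst. inversion H6; subst.
    inversion H8; subst. eauto 6.
  - intros [a [b [Ha [Hb Hz]]]]. econstructor; [repeat constructor|]; eauto.
Qed.

Lemma eval_Proj_inv i v y : eval (Proj i) v y -> y = nth i v 0.
Proof. intros H; now inversion H. Qed.

Lemma eval_diag_term tp u x y :
  eval (diag_term tp) [u; x] y <-> exists a, eval tp [u; u] a /\ eval tp [a; x] y.
Proof.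
  unfold diag_term. rewrite eval_Comp2. split.
  - intros [a [b [Ha [Hb Hy]]]]. apply eval_Proj_inv in Hb. simpl in Hb. subst b.
    apply eval_Comp2 in Ha as [a1 [a2 [Ha1 [Ha2 Ha]]]].
    apply eval_Proj_inv in Ha1, Ha2. simpl in *. subst. eauto.
  - intros [a [Ha Hy]]. exists a, x. split; [|split; [solve_proj | exact Hy]].
    apply eval_Comp2. exists u, u. split; [solve_proj | split; [solve_proj | exact Ha]].
Qed.

Lemma pcomp1_eval t : pcomp1 (fun x y => eval t [x] y).
Proof. exists t. reflexivity. Qed.

Lemma pcomp2_eval t : pcomp2 (fun x s y => eval t [x; s] y).
Proof. exists t. reflexivity. Qed.

Lemma kleene_recursion phi : acceptable phi ->
  forall h, tcomp1 h -> exists e, forall x y, phi e x y <-> phi (h e) x y.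
Proof.
  intros [[tp Hp] [Hidx Htrans]] h [th Hh].
  destruct (Htrans _ (pcomp2_eval (diag_term tp))) as [r [[tr Htr] Hr]].
  set (hr := Comp th [Comp tr [Proj 0]]).
  assert (Hhr : forall u, eval hr [u] (h (r u))).
  { intros u. econstructor; [constructor; [|constructor] | apply Hh].
    econstructor; [constructor; [solve_proj | constructor] | apply Htr]. }
  destruct (Hidx _ (pcomp1_eval hr)) as [v Hv].
  exists (r v). intros x y. rewrite <- Hr, eval_diag_term. split.
  - intros [a [Ha Hy]]. apply Hp, Hv in Ha.
    rewrite (eval_deterministic _ _ _ _ Ha (Hhr v)) in Hy. now apply Hp.
  - intros H. exists (h (r v)). split; [apply Hp, Hv, Hhr | now apply Hp].
Qed.

Lemma bounded_pred_listable (P : nat -> Prop) B :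
  (forall z, P z -> z < B) -> exists l, forall z, P z <-> In z l.
Proof.
  revert P; induction B as [|B IH]; intros P HB.
  - exists nil. intros z; split; [intros h; specialize (HB z h); lia | intros []].
  - destruct (IH (fun z => P z /\ z < B)) as [l Hl]; [intros z [_ h]; exact h|].
    destruct (classic (P B)) as [hB | hB]; [exists (B :: l) | exists l];
      intros z; simpl; rewrite <- Hl; specialize (HB z);
      destruct (Nat.eq_dec z B); subst; intuition lia.
Qed.

Lemma least_witness (P : nat -> Prop) n : P n -> exists k, P k /\ forall m, P m -> k <= m.
Proof.
  induction n as [n IH] using (well_founded_induction lt_wf). intros hn.
  destruct (classic (exists m, m < n /\ P m)) as [[m [hm pm]] | hno]; [exact (IH m hm pm)|].
  exists n. split; [exact hn|]. intros m pm. destruct (Nat.le_gt_cases n m); auto.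
  exfalso. eauto.
Qed.

Lemma mono_decr_values_bounded f n t0 y0 : mono_decr f -> f n t0 y0 ->
  exists B, forall z, values f n z -> z < B.
Proof.
  intros Hd H0.
  assert (Hearly : exists B, forall t z, t < t0 -> f n t z -> z <= B).
  { clear H0. induction t0 as [|t0 [B IH]]; [exists 0; intros; lia|].
    destruct (classic (exists z, f n t0 z)) as [[z hz] | hz].
    - exists (max B z). intros t z' ht h. destruct (Nat.eq_dec t t0).
      + subst. pose proof (Hd _ _ _ _ _ (le_n _) hz h). lia.
      + specialize (IH t z' ltac:(lia) h). lia.
    - exists B. intros t z' ht h. destruct (Nat.eq_dec t t0); [subst; exfalso; eauto|].
      apply (IH t); auto; lia. }
  destruct Hearly as [B HB]. exists (S (max B y0)). intros z [t h].
  destruct (Nat.lt_ge_cases t t0).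
  - specialize (HB t z ltac:(lia) h). lia.
  - pose proof (Hd _ _ _ _ _ H H0 h). lia.
Qed.

Lemma pmin_defined_iff f n : mono_decr f -> (exists c, pmin f n c) <-> exists t y, f n t y.
Proof.
  intros Hd. split; [intros [c [_ [[t h] _]]]; eauto|].
  intros [t0 [y0 H0]].
  destruct (mono_decr_values_bounded f n t0 y0 Hd H0) as [B HB].
  destruct (least_witness (values f n) y0 (ex_intro _ t0 H0)) as [k [hk hmin]].
  exists k. split; [exact (bounded_pred_listable _ B HB) | split; assumption].
Qed.

Definition stage_empty_test (tf : term) : term :=
  ifz (Comp (stage_card_term tf) [Proj 1; Proj 0]) tone Zero.

Definition first_nonempty_stage (tf : term) : term := Mu (stage_empty_test tf).

Lemma eval_stage_empty_test tf m e x :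
  eval (stage_empty_test tf) [m; e; x] (match stage_card tf e m with 0 => 1 | S _ => 0 end).
Proof.
  apply eval_ifz; [|apply eval_tone | constructor].
  econstructor; [solve_args | apply eval_stage_card_term].
Qed.

Lemma first_nonempty_stage_defined tf e x :
  (exists y, eval (first_nonempty_stage tf) [e; x] y) <-> exists t y, eval tf [e; t] y.
Proof.
  split.
  - intros [m Hm]. inversion Hm as [| | | | | | ? ? ? Hzero _]; subst.
    pose proof (eval_deterministic _ _ _ _ (eval_stage_empty_test tf m e x) Hzero) as E.
    destruct (proj1 (stage_card_pos tf e m)) as [t Ht].
    { destruct (stage_card tf e m); [discriminate | lia]. }
    exists t. apply in_some_stage. eauto.
  - intros [t Ht]. apply in_some_stage in Ht as [s Hs].
    assert (Hpos : 0 < stage_card tf e s) by (apply stage_card_pos; eauto).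
    destruct (least_witness (fun m => 0 < stage_card tf e m) s Hpos) as [m [hm hmin]].
    exists m. constructor.
    + pose proof (eval_stage_empty_test tf m e x) as H.
      destruct (stage_card tf e m); [lia | exact H].
    + intros m' hm'. exists 0. pose proof (eval_stage_empty_test tf m' e x) as H.
      destruct (stage_card tf e m') eqn:C; [exact H|]. specialize (hmin m' ltac:(lia)). lia.
Qed.

Lemma cardRE_not_MinPR phi : acceptable phi -> ~ MinPR (cardRE phi).
Proof.
  intros Hacc [f [[tf Hf] [Hdec Hmin]]]. pose proof Hacc as [_ [_ Htrans]].
  destruct (Htrans _ (pcomp2_eval (first_nonempty_stage tf))) as [s [Hs Hsp]].
  destruct (kleene_recursion phi Hacc s Hs) as [e He].
  assert (HW : forall x, W phi e x <-> exists t y, f e t y).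
  { intros x. unfold W. setoid_rewrite He. setoid_rewrite <- Hsp.
    rewrite first_nonempty_stage_defined. setoid_rewrite Hf. reflexivity. }
  destruct (classic (exists t y, f e t y)) as [D | ND].
  - destruct (proj2 (pmin_defined_iff f e Hdec) D) as [c Hc].
    apply Hmin in Hc as [l [Hnd [Hin Hlen]]].
    assert (Hall : S c <= length l).
    { rewrite <- (length_seq (S c) 0). apply NoDup_incl_length; [apply seq_NoDup|].
      intros x _. apply Hin, HW, D. }
    lia.
  - apply ND, (pmin_defined_iff f e Hdec). exists 0. apply Hmin.
    exists nil. split; [constructor | split; [|reflexivity]].
    intros x. rewrite HW. split; [intros [] | intros H; exact (ND H)].
Qed.

Theorem mainTheorem19 :
  forall phi : nat -> nat -> nat -> Prop,
    acceptable phi ->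
    MaxRec (cardRE phi) /\ ~ MinPR (cardRE phi).
Proof.
  intros phi Hacc. split.
  - apply cardRE_MaxRec, Hacc.
  - apply cardRE_not_MinPR, Hacc.
Qed.
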